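(* Let $m$ be a positive integer, $q>1$ real, $\kappa\in\mathbb{C}$ with $\kappa\notin\frac{2\pi i}{\log q}\mathbb{Z}$, $c\in\mathbb{C}$, and let $\Psi_0,\dots,\Psi_{m-1}$ and $\Xi_0,\dots,\Xi_{m-1}$ be $1$-periodic continuous functions such that $$\sum_{0\le k<m}(\log_qN)^k\Psi_k(\log_qN)=\sum_{0\le k<m}(\log_qN)^k\Xi_k(\log_qN)+cN^{-\kappa}+o(1)$$ for integers $N\to\infty$. Then $\Psi_k=\Xi_k$ for $0\le k<m$. *)

From Stdlib Require Import Reals ZArith.
From Coquelicot Require Export Coquelicot.
Open Scope R_scope.

Definition logq (q x : R) : R := ln x / ln q.

(* complex power x^z for real x > 0 : x^z = exp(z ln x)
   = exp(Re z ln x) (cos(Im z ln x) + i sin(Im z ln x)) *)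
Definition Crpow (x : R) (z : C) : C :=
  (exp (fst z * ln x) * cos (snd z * ln x),
   exp (fst z * ln x) * sin (snd z * ln x)).

Fixpoint Csum (f : nat -> C) (n : nat) : C :=
  match n with
  | O => RtoC 0
  | S n' => Cplus (Csum f n') (f n')
  end.

Definition logsum (q : R) (m : nat) (F : nat -> R -> C) (N : nat) : C :=
  let L := logq q (INR N) in Csum (fun k => Cmult (RtoC (L ^ k)) (F k L)) m.

From Stdlib Require Import Reals ZArith Lra Lia.
From Coquelicot Require Import Coquelicot.
Open Scope R_scope.

(* Put D_k = Psi_k - Xi_k, so that sum_k L^k D_k(L) - c N^(-kappa) -> 0 with L = log_q N, and let
   n be the top index. Sample along integers N_j just above q^(j+x): then L_j = j + x + o(1), so by
   periodicity and continuity D_k(L_j) -> D_k(x), and dividing by L_j^n shows that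
   v_j := c N_j^(-kappa) / L_j^n tends to D_n(x). But v_(j+1) / v_j = (N_(j+1)/N_j)^(-kappa)
   (L_j/L_(j+1))^n tends to q^(-kappa), which is not 1, so the limit D_n(x) vanishes. No case
   distinction on the sign of Re kappa is needed. Downward induction on n finishes the proof. *)

Section ComplexLimits.

Context {T : Type} {F : (T -> Prop) -> Prop} {FF : Filter F}.

Lemma filterlim_C_pair (f g : T -> R) (a b : R) :
  filterlim f F (locally a) -> filterlim g F (locally b) ->
  filterlim (fun t => (f t, g t) : C) F (locally ((a, b) : C)).
Proof.
  intros Hf Hg P [eps HP]; unfold filtermap.
  apply (filter_imp (fun t => ball a eps (f t) /\ ball b eps (g t))).
  - intros t Ht. now apply HP.
  - apply filter_and; [apply Hf | apply Hg]; exists eps; auto.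
Qed.

Lemma filterlim_RtoC (f : T -> R) (a : R) :
  filterlim f F (locally a) -> filterlim (fun t => RtoC (f t)) F (locally (RtoC a)).
Proof. intros Hf. apply filterlim_C_pair; [exact Hf | apply filterlim_const]. Qed.

Lemma filterlim_Cplus (u v : T -> C) (a b : C) :
  filterlim u F (locally a) -> filterlim v F (locally b) ->
  filterlim (fun t => (u t + v t)%C) F (locally (a + b)%C).
Proof. intros Hu Hv. exact (filterlim_comp_2 _ _ _ Hu Hv (filterlim_plus a b)). Qed.

Lemma filterlim_Cmult (u v : T -> C) (a b : C) :
  filterlim u F (locally a) -> filterlim v F (locally b) ->
  filterlim (fun t => (u t * v t)%C) F (locally (a * b)%C).
Proof.
  intros Hu Hv. eapply filterlim_comp_2; [exact Hu | exact Hv |].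
  (* [filterlim_mult] uses the topology of [C_AbsRing] (balls of [Cmod]), not the product
     topology of [C]; [locally_norm] converts between the two. *)
  intros P HP.
  destruct (filterlim_mult (K := C_AbsRing) a b P (locally_norm_le_locally (V := C_NormedModule) _ P HP))
    as [Q R HQ HR HQR].
  exists Q R; [apply (locally_le_locally_norm (V := C_NormedModule)); exact HQ
             | apply (locally_le_locally_norm (V := C_NormedModule)); exact HR | exact HQR].
Qed.

Lemma filterlim_Cminus (u v : T -> C) (a b : C) :
  filterlim u F (locally a) -> filterlim v F (locally b) ->
  filterlim (fun t => (u t - v t)%C) F (locally (a - b)%C).
Proof.
  intros Hu Hv. apply filterlim_Cplus; [exact Hu |].
  eapply filterlim_comp; [exact Hv | apply (filterlim_opp (V := C_NormedModule))].
Qed.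

End ComplexLimits.

Lemma ln_pos (q : R) : 1 < q -> 0 < ln q.
Proof. intros Hq. rewrite <- ln_1. apply ln_increasing; lra. Qed.

Lemma Crpow_mult (x y : R) (z : C) :
  0 < x -> 0 < y -> Crpow (x * y) z = (Crpow x z * Crpow y z)%C.
Proof.
  intros Hx Hy. unfold Crpow, Cmult; simpl.
  rewrite ln_mult by assumption.
  rewrite !Rmult_plus_distr_l, exp_plus, cos_plus, sin_plus.
  f_equal; ring.
Qed.

Lemma continuous_Crpow (z : C) (x : R) : 0 < x -> continuous (fun y => Crpow y z) x.
Proof.
  intros Hx. unfold Crpow.
  assert (Hln : forall a : R, continuous (fun y => a * ln y) x).
  { intros a. apply (continuous_scal_r a ln x). apply continuous_ln, Hx. }
  apply filterlim_C_pair.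
  - apply (continuous_mult (K := R_AbsRing) (fun y => exp (fst z * ln y)) (fun y => cos (snd z * ln y))).
    + apply continuous_exp_comp, Hln.
    + apply continuous_cos_comp, Hln.
  - apply (continuous_mult (K := R_AbsRing) (fun y => exp (fst z * ln y)) (fun y => sin (snd z * ln y))).
    + apply continuous_exp_comp, Hln.
    + apply continuous_sin_comp, Hln.
Qed.

Lemma cos_eq_1_int (t : R) : cos t = 1 -> exists k : Z, t = 2 * PI * IZR k.
Proof.
  intros H. replace t with (2 * (t / 2)) in H by field. rewrite cos_2a_sin in H.
  assert (sin (t / 2) = 0) as Hs by nra.
  destruct (sin_eq_0_0 _ Hs) as [k Hk]. exists k. lra.
Qed.

Lemma Crpow_eq_1 (q : R) (z : C) :
  1 < q -> Crpow q z = RtoC 1 -> exists k : Z, z = (0, 2 * PI * IZR k / ln q).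
Proof.
  intros Hq H. pose proof (ln_pos q Hq) as Hlnq.
  unfold Crpow, RtoC in H. injection H as Hre Him.
  set (a := fst z * ln q) in *. set (b := snd z * ln q) in *.
  assert (Hexp : exp a = 1).
  { assert (Hsq : exp a * exp a = (exp a * cos b) ^ 2 + (exp a * sin b) ^ 2).
    { rewrite <- (Rmult_1_r (exp a * exp a)), <- (sin2_cos2 b). unfold Rsqr. ring. }
    rewrite Hre, Him in Hsq. pose proof (exp_pos a). nra. }
  assert (Hcos : cos b = 1) by (rewrite Hexp, Rmult_1_l in Hre; exact Hre).
  destruct (cos_eq_1_int b Hcos) as [k Hk]. exists k.
  destruct z as [z1 z2]. unfold a, b in *; simpl in *. f_equal.
  - rewrite <- exp_0 in Hexp. apply exp_inv in Hexp. nra.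
  - apply Rmult_eq_reg_r with (ln q); [| lra]. rewrite Hk. field. lra.
Qed.

Lemma Crpow_scaled_step (a b la lb : R) (c z : C) (n : nat) :
  0 < a -> 0 < b -> la <> 0 ->
  (RtoC ((/ lb) ^ n) * (c * Crpow b z))%C =
  (RtoC ((/ la) ^ n) * (c * Crpow a z) * (RtoC ((la / lb) ^ n) * Crpow (b / a) z))%C.
Proof.
  intros Ha Hb Hla.
  assert (Hsplit : b = a * (b / a)) by (field; lra).
  assert (Hpow : (/ lb) ^ n = (/ la) ^ n * (la / lb) ^ n).
  { rewrite <- Rpow_mult_distr. f_equal. unfold Rdiv. rewrite <- Rmult_assoc, Rinv_l by exact Hla. ring. }
  rewrite Hsplit at 1. rewrite Crpow_mult, Hpow, RtoC_mult.
  - ring.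
  - exact Ha.
  - apply Rdiv_lt_0_compat; assumption.
Qed.

Lemma is_lim_seq_pow (u : nat -> R) (l : R) (n : nat) :
  is_lim_seq u l -> is_lim_seq (fun j => u j ^ n) (l ^ n).
Proof.
  intros Hu. induction n as [|n IH]; simpl.
  - apply is_lim_seq_const.
  - apply (is_lim_seq_mult' _ _ _ _ Hu IH).
Qed.

Lemma eventually_pos_of_p_infty (u : nat -> R) :
  is_lim_seq u p_infty -> eventually (fun j => 0 < u j).
Proof. intros Hu. apply (Hu (fun y => 0 < y)). exists 0. auto. Qed.

Lemma Cpow_mult_eq_1 (a l : C) (n : nat) : (a * l = 1)%C -> (a ^ n * l ^ n = 1)%C.
Proof.
  intros Hal. induction n as [|n IH]; simpl.
  - ring.
  - transitivity ((a * l) * (a ^ n * l ^ n))%C; [ring | now rewrite Hal, IH, Cmult_1_l].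
Qed.

(* Induction on n via [L^-(n+1) P_(n+2)(L) = L^-1 (L^-n P_(n+1)(L)) + d_(n+1)]. *)
Lemma filterlim_poly_lead_coeff (L : nat -> R) (d : nat -> nat -> C) (delta : nat -> C) (n : nat) :
  is_lim_seq L p_infty ->
  (forall k, (k <= n)%nat -> filterlim (d k) eventually (locally (delta k))) ->
  filterlim (fun j => RtoC ((/ L j) ^ n) * Csum (fun k => RtoC (L j ^ k) * d k j) (S n))%C
    eventually (locally (delta n)).
Proof.
  intros HL Hd. induction n as [|n IH].
  - apply (filterlim_ext (d 0%nat)); [intros j; simpl; ring | apply Hd; lia].
  - assert (Hinv : filterlim (fun j => RtoC (/ L j)) eventually (locally (RtoC 0))).
    { apply filterlim_RtoC. exact (is_lim_seq_inv L p_infty HL ltac:(discriminate)). }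
    rewrite <- (Cplus_0_l (delta (S n))), <- (Cmult_0_l (delta n)).
    apply (filterlim_ext_loc
             (fun j => RtoC (/ L j) * (RtoC ((/ L j) ^ n) * Csum (fun k => RtoC (L j ^ k) * d k j) (S n))
                       + d (S n) j)%C).
    + apply (filter_imp (fun j => 0 < L j)); [| exact (eventually_pos_of_p_infty L HL)].
      intros j Hj. change (Csum ?f (S (S n))) with (Csum f (S n) + f (S n))%C.
      assert (Hone : (RtoC ((/ L j) ^ S n) * RtoC (L j ^ S n) = 1)%C).
      { rewrite !RtoC_pow. apply Cpow_mult_eq_1. rewrite <- RtoC_mult, Rinv_l by lra. reflexivity. }
      transitivity (RtoC (/ L j) * (RtoC ((/ L j) ^ n) * Csum (fun k => RtoC (L j ^ k) * d k j) (S n))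
                    + (RtoC ((/ L j) ^ S n) * RtoC (L j ^ S n)) * d (S n) j)%C.
      * rewrite Hone. ring.
      * simpl. rewrite !RtoC_mult. ring.
    + apply filterlim_Cplus; [apply filterlim_Cmult; [exact Hinv | apply IH] | apply Hd]; intros; auto; lia.
Qed.

Lemma filterlim_lead_coeff (L : nat -> R) (d : nat -> nat -> C) (delta : nat -> C) (e : nat -> C) (n : nat) :
  is_lim_seq L p_infty ->
  (forall k, (k <= n)%nat -> filterlim (d k) eventually (locally (delta k))) ->
  filterlim (fun j => Csum (fun k => RtoC (L j ^ k) * d k j) (S n) - e j)%C eventually (locally (RtoC 0)) ->
  filterlim (fun j => RtoC ((/ L j) ^ n) * e j)%C eventually (locally (delta n)).
Proof.
  intros HL Hd He.
  assert (Hpow : filterlim (fun j => RtoC ((/ L j) ^ n)) eventually (locally (RtoC (0 ^ n)))).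
  { apply filterlim_RtoC, is_lim_seq_pow. exact (is_lim_seq_inv L p_infty HL ltac:(discriminate)). }
  replace (delta n) with (delta n - RtoC (0 ^ n) * 0)%C by ring.
  apply (filterlim_ext (fun j => RtoC ((/ L j) ^ n) * Csum (fun k => RtoC (L j ^ k) * d k j) (S n)
                                 - RtoC ((/ L j) ^ n) * (Csum (fun k => RtoC (L j ^ k) * d k j) (S n) - e j))%C).
  - intros j. ring.
  - apply filterlim_Cminus; [now apply filterlim_poly_lead_coeff |].
    apply filterlim_Cmult; [exact Hpow | exact He].
Qed.

Lemma filterlim_ratio_eq0 (v s : nat -> C) (delta rho : C) :
  rho <> RtoC 1 ->
  filterlim v eventually (locally delta) ->
  filterlim s eventually (locally rho) ->
  eventually (fun j => v (S j) = (v j * s j)%C) ->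
  delta = 0.
Proof.
  intros Hrho Hv Hs Hrec.
  assert (Hfix : delta = (delta * rho)%C).
  { apply (filterlim_locally_unique (F := eventually) (fun j => v (S j))).
    - eapply filterlim_comp; [apply eventually_subseq; intros; lia | exact Hv].
    - apply (filterlim_ext_loc (fun j => v j * s j)%C).
      + destruct Hrec as [N HN]. exists N. intros j Hj. symmetry. apply HN. exact Hj.
      + apply filterlim_Cmult; assumption. }
  assert (Hrho1 : (1 - rho)%C <> 0).
  { intros H. apply Hrho. replace rho with (1 - (1 - rho))%C by ring. rewrite H. ring. }
  replace delta with ((delta - delta * rho) / (1 - rho))%C by (field; exact Hrho1).
  rewrite <- Hfix. field. exact Hrho1.
Qed.

Lemma is_lim_seq_p_infty_of_shift (L : nat -> R) (x : R) :
  is_lim_seq (fun j => L j - INR j) x -> is_lim_seq L p_infty.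
Proof.
  intros HL. apply (is_lim_seq_ext (fun j => (L j - INR j) + INR j)); [intros j; ring |].
  apply (is_lim_seq_plus _ _ x p_infty p_infty HL is_lim_seq_INR). reflexivity.
Qed.

Lemma is_lim_seq_succ_ratio_of_shift (L : nat -> R) (x : R) :
  is_lim_seq (fun j => L j - INR j) x -> is_lim_seq (fun j => L j / L (S j)) 1.
Proof.
  intros HL.
  assert (HLS : is_lim_seq (fun j => L (S j)) p_infty).
  { apply (is_lim_seq_incr_1 L p_infty), (is_lim_seq_p_infty_of_shift L x HL). }
  assert (Hstep : is_lim_seq (fun j => L (S j) - L j) 1).
  { apply (is_lim_seq_ext (fun j => (L (S j) - INR (S j)) - (L j - INR j) + 1)).
    - intros j. rewrite S_INR. ring.
    - replace (Finite 1) with (Finite (x - x + 1)) by (f_equal; ring).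
      apply is_lim_seq_plus'; [| apply is_lim_seq_const].
      apply is_lim_seq_minus'; [apply (is_lim_seq_incr_1 (fun j => L j - INR j)) |]; exact HL. }
  apply (is_lim_seq_ext_loc (fun j => 1 - (L (S j) - L j) * / L (S j))).
  - apply (filter_imp (fun j => 0 < L (S j))); [| exact (eventually_pos_of_p_infty _ HLS)].
    intros j Hj. field. lra.
  - replace (Finite 1) with (Finite (1 - 1 * 0)) by (f_equal; ring).
    apply is_lim_seq_minus'; [apply is_lim_seq_const |].
    apply (is_lim_seq_mult' _ _ _ _ Hstep).
    exact (is_lim_seq_inv _ p_infty HLS ltac:(discriminate)).
Qed.

Definition sample (q x : R) (j : nat) : nat := Z.to_nat (up (Rpower q (INR j + x))).

Lemma sample_bounds (q x : R) (j : nat) :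
  Rpower q (INR j + x) < INR (sample q x j) <= Rpower q (INR j + x) + 1.
Proof.
  unfold sample. destruct (archimed (Rpower q (INR j + x))) as [Hup Hle].
  assert (0 < Rpower q (INR j + x)) by apply exp_pos.
  assert (0 <= up (Rpower q (INR j + x)))%Z by (apply le_IZR; lra).
  rewrite (INR_IZR_INZ (Z.to_nat _)), Z2Nat.id by assumption. lra.
Qed.

Lemma sample_pos (q x : R) (j : nat) : 0 < INR (sample q x j).
Proof. destruct (sample_bounds q x j). pose proof (exp_pos ((INR j + x) * ln q)). unfold Rpower in *. lra. Qed.

Section SampleSequence.

Variables (q x : R).
Hypothesis Hq : 1 < q.

Lemma is_lim_seq_Rpower_shift : is_lim_seq (fun j => Rpower q (INR j + x)) p_infty.
Proof.
  apply (is_lim_seq_ext (fun j => q ^ j * Rpower q x)).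
  - intros j. rewrite Rpower_plus, Rpower_pow by lra. reflexivity.
  - apply (is_lim_seq_mult _ _ p_infty (Rpower q x) p_infty (is_lim_seq_geom_p q Hq)).
    + apply is_lim_seq_const.
    + apply is_Rbar_mult_p_infty_pos. apply exp_pos.
Qed.

Lemma sample_ratio : is_lim_seq (fun j => INR (sample q x j) / Rpower q (INR j + x)) 1.
Proof.
  apply (is_lim_seq_le_le (fun _ => 1) _ (fun j => 1 + / Rpower q (INR j + x))).
  - intros j. destruct (sample_bounds q x j) as [Hlo Hhi].
    assert (Hr : 0 < Rpower q (INR j + x)) by apply exp_pos.
    split; apply Rmult_le_reg_r with (Rpower q (INR j + x)); try assumption;
      field_simplify; lra.
  - apply is_lim_seq_const.
  - replace (Finite 1) with (Rbar_plus 1 0) by (simpl; f_equal; ring).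
    apply is_lim_seq_plus'; [apply is_lim_seq_const |].
    exact (is_lim_seq_inv _ p_infty is_lim_seq_Rpower_shift ltac:(discriminate)).
Qed.

Lemma sample_log : is_lim_seq (fun j => logq q (INR (sample q x j)) - INR j) x.
Proof.
  pose proof (ln_pos q Hq) as Hlnq.
  apply (is_lim_seq_ext (fun j => x + ln (INR (sample q x j) / Rpower q (INR j + x)) / ln q)).
  - intros j. destruct (sample_bounds q x j) as [Hlo _].
    assert (Hr : 0 < Rpower q (INR j + x)) by apply exp_pos.
    unfold logq, Rdiv. rewrite ln_mult, ln_Rinv, ln_Rpower by (try apply Rinv_0_lt_compat; lra).
    field. lra.
  - replace (Finite x) with (Finite (x + ln 1 / ln q)) by (rewrite ln_1; f_equal; field; lra).
    apply is_lim_seq_plus'; [apply is_lim_seq_const |].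
    apply is_lim_seq_mult'; [| apply is_lim_seq_const].
    eapply filterlim_comp; [exact sample_ratio | apply continuous_ln; lra].
Qed.

Lemma sample_succ_ratio : is_lim_seq (fun j => INR (sample q x (S j)) / INR (sample q x j)) q.
Proof.
  set (ratio := fun j => INR (sample q x j) / Rpower q (INR j + x)).
  apply (is_lim_seq_ext (fun j => q * ratio (S j) / ratio j)).
  - intros j. unfold ratio. destruct (sample_bounds q x j) as [Hlo _].
    assert (Hr : 0 < Rpower q (INR j + x)) by apply exp_pos.
    rewrite S_INR, (Rplus_comm (INR j) 1), Rplus_assoc, Rpower_plus, Rpower_1 by lra.
    field. lra.
  - replace (Finite q) with (Finite (q * 1 / 1)) by (f_equal; field).
    apply is_lim_seq_div'; [apply is_lim_seq_mult'; [apply is_lim_seq_const |] | | lra].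
    + apply (is_lim_seq_incr_1 ratio 1), sample_ratio.
    + apply sample_ratio.
Qed.

Lemma sample_unbounded : filterlim (sample q x) eventually eventually.
Proof.
  intros P [N0 HP]. unfold filtermap.
  destruct (is_lim_seq_Rpower_shift (fun y => INR N0 < y) (ex_intro _ (INR N0) (fun y Hy => Hy)))
    as [J HJ].
  exists J. intros j Hj. apply HP, INR_le. destruct (sample_bounds q x j). specialize (HJ j Hj). lra.
Qed.

End SampleSequence.

Lemma periodic_shift_nat (f : R -> C) :
  (forall y, f (y + 1) = f y) -> forall (j : nat) (y : R), f (INR j + y) = f y.
Proof.
  intros Hf j. induction j as [|j IH]; intros y.
  - simpl. now rewrite Rplus_0_l.
  - rewrite S_INR. replace (INR j + 1 + y) with (INR j + y + 1) by ring. now rewrite Hf.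
Qed.

Lemma logsum_minus (q : R) (m : nat) (F G : nat -> R -> C) (N : nat) :
  logsum q m (fun k y => (F k y - G k y)%C) N = (logsum q m F N - logsum q m G N)%C.
Proof. unfold logsum. cbv zeta. induction m as [|m IH]; simpl; [ring | rewrite IH; ring]. Qed.

Lemma filterlim_C0_of_Cmod_lt (u : nat -> C) :
  (forall eps, 0 < eps -> exists N0, forall N, (N0 <= N)%nat -> Cmod (u N) < eps) ->
  filterlim u eventually (locally (RtoC 0)).
Proof.
  intros Hu. apply (filterlim_norm_zero (V := C_NormedModule)).
  apply (proj2 (is_lim_seq_Reals _ 0)). intros eps Heps.
  destruct (Hu eps Heps) as [N0 HN0]. exists N0. intros N HN.
  unfold R_dist. rewrite Rminus_0_r, Rabs_pos_eq by apply Cmod_ge_0. apply HN0. lia.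
Qed.

Section LogPolynomialUniqueness.

Variables (q : R) (kappa c : C).
Hypothesis Hq : 1 < q.
Hypothesis Hkappa : forall z : Z, kappa <> (0, 2 * PI * IZR z / ln q).

Lemma Crpow_q_neq_1 : Crpow q (Copp kappa) <> RtoC 1.
Proof.
  intros H. destruct (Crpow_eq_1 q _ Hq H) as [k Hk]. apply (Hkappa (- k)%Z).
  pose proof (ln_pos q Hq) as Hlnq.
  destruct kappa as [a b]. injection Hk as Ha Hb.
  rewrite opp_IZR. f_equal; [lra | field_simplify; lra].
Qed.

Lemma logsum_lead_coeff_eq0 (n : nat) (D : nat -> R -> C) :
  (forall k y, (k <= n)%nat -> D k (y + 1) = D k y) ->
  (forall k y, (k <= n)%nat -> continuous (D k) y) ->
  filterlim (fun N => logsum q (S n) D N - c * Crpow (INR N) (Copp kappa))%C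
    eventually (locally (RtoC 0)) ->
  forall x, D n x = 0.
Proof.
  intros Hper Hcont Hlim x.
  set (N := sample q x).
  set (L := fun j => logq q (INR (N j))).
  assert (HL : is_lim_seq (fun j => L j - INR j) x) by exact (sample_log q x Hq).
  assert (HLinf : is_lim_seq L p_infty) by exact (is_lim_seq_p_infty_of_shift L x HL).
  assert (HNpos : forall j, 0 < INR (N j)) by (intros j; apply sample_pos).
  set (e := fun j => (c * Crpow (INR (N j)) (Copp kappa))%C).
  apply (filterlim_ratio_eq0 (fun j => RtoC ((/ L j) ^ n) * e j)%C
           (fun j => RtoC ((L j / L (S j)) ^ n) * Crpow (INR (N (S j)) / INR (N j)) (Copp kappa))%C
           (D n x) (Crpow q (Copp kappa)) Crpow_q_neq_1).
  - apply (filterlim_lead_coeff L (fun k j => D k (L j)) (fun k => D k x) e n HLinf).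
    + intros k Hk. apply (filterlim_ext (fun j => D k (L j - INR j))).
      * intros j. rewrite <- (periodic_shift_nat (D k) (fun y => Hper k y Hk) j). f_equal. ring.
      * eapply filterlim_comp; [exact HL | apply Hcont, Hk].
    + exact (filterlim_comp _ _ _ N _ eventually eventually _ (sample_unbounded q x Hq) Hlim).
  - rewrite <- (Cmult_1_l (Crpow q _)). apply filterlim_Cmult.
    + rewrite <- (pow1 n). apply filterlim_RtoC, is_lim_seq_pow.
      exact (is_lim_seq_succ_ratio_of_shift L x HL).
    + apply (filterlim_comp _ _ _ (fun j => INR (N (S j)) / INR (N j)) (fun y => Crpow y (Copp kappa))
               eventually (locally q)).
      * exact (sample_succ_ratio q x Hq).
      * apply continuous_Crpow. lra.
  - apply (filter_imp (fun j => 0 < L j)); [| exact (eventually_pos_of_p_infty L HLinf)].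
    intros j Hj. apply Crpow_scaled_step; [apply HNpos | apply HNpos | lra].
Qed.

Lemma logsum_coeffs_eq0 (n : nat) (D : nat -> R -> C) :
  (forall k y, (k < n)%nat -> D k (y + 1) = D k y) ->
  (forall k y, (k < n)%nat -> continuous (D k) y) ->
  filterlim (fun N => logsum q n D N - c * Crpow (INR N) (Copp kappa))%C
    eventually (locally (RtoC 0)) ->
  forall k y, (k < n)%nat -> D k y = 0.
Proof.
  induction n as [|n IH]; intros Hper Hcont Hlim k y Hk; [lia |].
  assert (Htop : forall x, D n x = 0).
  { apply logsum_lead_coeff_eq0; [intros; apply Hper | intros; apply Hcont | exact Hlim]; lia. }
  destruct (Nat.eq_dec k n) as [-> | Hne]; [apply Htop |].
  apply IH; [intros; apply Hper; lia | intros; apply Hcont; lia | | lia].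
  apply (filterlim_ext (fun N => logsum q (S n) D N - c * Crpow (INR N) (Copp kappa))%C); [| exact Hlim].
  intros N. unfold logsum. simpl. rewrite Htop. ring.
Qed.

End LogPolynomialUniqueness.

Theorem lemmaF2 (m : nat) (q : R) (kappa c : C) (Psi Xi : nat -> R -> C) :
  (0 < m)%nat ->
  1 < q ->
  (forall z : Z, kappa <> (0, 2 * PI * IZR z / ln q)) ->
  (forall k x, (k < m)%nat -> Psi k (x + 1) = Psi k x) ->
  (forall k x, (k < m)%nat -> Xi k (x + 1) = Xi k x) ->
  (forall k x, (k < m)%nat -> continuous (Psi k) x) ->
  (forall k x, (k < m)%nat -> continuous (Xi k) x) ->
  (forall eps : R, 0 < eps -> exists N0 : nat, forall N : nat, (N0 <= N)%nat ->
     Cmod (Cminus (logsum q m Psi N)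
            (Cplus (logsum q m Xi N) (Cmult c (Crpow (INR N) (Copp kappa)))))
     < eps) ->
  forall k : nat, (k < m)%nat -> forall x : R, Psi k x = Xi k x.
Proof.
  intros _ Hq Hkappa HperPsi HperXi HcontPsi HcontXi Hlim k Hk x.
  set (D := fun k y => (Psi k y - Xi k y)%C).
  assert (HD : D k x = 0).
  { apply (logsum_coeffs_eq0 q kappa c Hq Hkappa m D); [| | | exact Hk].
    - intros j y Hj. unfold D. rewrite HperPsi, HperXi by exact Hj. reflexivity.
    - intros j y Hj. apply filterlim_Cminus; [apply HcontPsi | apply HcontXi]; exact Hj.
    - apply (filterlim_ext (fun N => Cminus (logsum q m Psi N)
                               (Cplus (logsum q m Xi N) (Cmult c (Crpow (INR N) (Copp kappa)))))).
      + intros N. unfold D. rewrite logsum_minus. ring.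
      + apply filterlim_C0_of_Cmod_lt, Hlim. }
  unfold D in HD. replace (Psi k x) with (Psi k x - Xi k x + Xi k x)%C by ring.
  rewrite HD. ring.
Qed.
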